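(* Let $q(x)=\sum_{i=1}^nq_i(x_i)$, where each $q_i:\mathbb{R}\to\mathbb{R}\cup\{+\infty\}$ is proper, convex and lower semicontinuous and $\mathrm{gph}\,\partial q_i$ is the polygonal line in $\mathbb{R}^2$ connecting successively the points $(\xi^i_1,-\infty),(\xi^i_1,\eta^i_1),(\xi^i_2,\eta^i_2),\dots,(\xi^i_{2m_i},\eta^i_{2m_i}),(\xi^i_{2m_i},+\infty)$ for some integer $m_i\ge1$, where $\Delta\xi^i_j:=\xi^i_{j+1}-\xi^i_j>0$ for odd $j$, $\Delta\xi^i_j=0$ for even $j$, $\Delta\eta^i_j:=\eta^i_{j+1}-\eta^i_j\ge0$ for odd $j$ and $\Delta\eta^i_j>0$ for even $j$. Let $(x,x^* )\in\mathrm{gph}\,\partial q$, set $\mathcal{A}_i=\{\xi^i_1\}\cup\{\xi^i_{2m_i}\}\cup\{\xi^i_j:\Delta\xi^i_j=0\}$, and let $G$ be the $n\times n$ diagonal matrix with \[G_{ii}=\begin{cases}1&\text{if }x_i\in\mathcal{A}_i,\\ \dfrac{\Delta\eta^i_j}{\Delta\xi^i_j+\Delta\eta^i_j}&\text{if }x_i\in[\xi^i_j,\xi^i_{j+1}]\setminus\mathcal{A}_i\text{ and }j\in\{1,\dots,2m_i\}\text{ is odd},\end{cases}\qquad i=1,\dots,n.\] Then $G$ is positive semidefinite, $\|G\|\le1$, and $\{((I-G)v^*,Gv^* ):v^*\in\mathbb{R}^n\}\subset\mathrm{gph}\, D^*(\partial q)(x,x^* )$.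
   Context: $\partial$ denotes the convex subdifferential. The polygonal line consists of the vertical ray from $(\xi^i_1,-\infty)$ to $(\xi^i_1,\eta^i_1)$, the segments between consecutive listed points, and the vertical ray from $(\xi^i_{2m_i},\eta^i_{2m_i})$ upward. $D^*$ is the limiting (Mordukhovich) coderivative: $D^*F(\bar x,\bar y)(v^* )=\{u^*:(u^*,-v^* )\in N_{\mathrm{gph}\, F}(\bar x,\bar y)\}$ with $N$ the limiting normal cone (limits of regular normals, the regular normal cone being the polar of the contingent cone), and $\mathrm{gph}\, D^*F(\bar x,\bar y)=\{(v^*,u^* ):u^*\in D^*F(\bar x,\bar y)(v^* )\}$. $\|G\|$ is the spectral norm. *)

From HB Require Import structures.
From mathcomp Require Import all_boot all_order all_algebra.
From mathcomp Require Import all_classical all_reals all_analysis.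
Set Implicit Arguments. Unset Strict Implicit. Unset Printing Implicit Defensive.
Import Order.TTheory GRing.Theory Num.Theory.
Import numFieldNormedType.Exports.
Local Open Scope classical_set_scope.
Local Open Scope ring_scope.

Section Defs.
Variable R : realType.

Definition proper_fun (f : R -> \bar R) : Prop :=
  (forall t, f t != -oo%E) /\ (exists t, f t \is a fin_num).

Definition convex_fun (f : R -> \bar R) : Prop :=
  forall (x y l : R), (0 < l < 1)%R ->
    (f (l * x + (1 - l) * y)%R <= l%:E * f x + (1 - l)%:E * f y)%E.

Definition lsc_fun (f : R -> \bar R) : Prop :=
  forall (t a : R), (a%:E < f t)%E ->
    exists2 d : R, 0 < d & forall s, `|s - t| < d -> (a%:E < f s)%E.

Definition subdiff1 (f : R -> \bar R) (t : R) : set R :=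
  [set s | f t \is a fin_num /\ forall y, (f t + (s * (y - t))%:E <= f y)%E].

Definition gph1 (F : R -> set R) : set (R * R) := [set p | F p.1 p.2].

Definition polygonal_line (m : nat) (xi eta : nat -> R) : set (R * R) :=
  [set p | (p.1 = xi 1%N /\ p.2 <= eta 1%N)
        \/ (p.1 = xi (2 * m)%N /\ eta (2 * m)%N <= p.2)
        \/ (exists j : nat, (1 <= j < 2 * m)%N /\
             exists2 t : R, 0 <= t <= 1 &
               p = ((1 - t) * xi j + t * xi j.+1, (1 - t) * eta j + t * eta j.+1))].

Definition dotv n (u v : 'cV[R]_n) : R := \sum_(i < n) u i ord0 * v i ord0.

Definition eucl_norm n (u : 'cV[R]_n) : R := Num.sqrt (dotv u u).

Definition spectral_norm n (A : 'M[R]_n) : R :=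
  sup [set eucl_norm (A *m v) | v in [set v : 'cV[R]_n | eucl_norm v = 1]].

Definition psd n (A : 'M[R]_n) : Prop := forall v : 'cV[R]_n, 0 <= dotv v (A *m v).

Definition subdiff n (f : 'cV[R]_n -> \bar R) (x : 'cV[R]_n) : set 'cV[R]_n :=
  [set s | f x \is a fin_num /\ forall y, (f x + (dotv s (y - x))%:E <= f y)%E].

Definition dot2 n (p q : 'cV[R]_n * 'cV[R]_n) : R := dotv p.1 q.1 + dotv p.2 q.2.

Definition gph n (F : 'cV[R]_n -> set 'cV[R]_n) : set ('cV[R]_n * 'cV[R]_n) :=
  [set p | F p.1 p.2].

Definition contingent_cone n (C : set ('cV[R]_n * 'cV[R]_n)) (z : 'cV[R]_n * 'cV[R]_n)
  : set ('cV[R]_n * 'cV[R]_n) :=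
  [set w | exists (t : nat -> R) (w_ : nat -> 'cV[R]_n * 'cV[R]_n),
      (forall k, 0 < t k) /\ t @ \oo --> 0 /\ w_ @ \oo --> w /\
      (forall k, C (z.1 + t k *: (w_ k).1, z.2 + t k *: (w_ k).2))].

Definition regular_normal_cone n (C : set ('cV[R]_n * 'cV[R]_n)) (z : 'cV[R]_n * 'cV[R]_n)
  : set ('cV[R]_n * 'cV[R]_n) :=
  [set v | forall w, contingent_cone C z w -> dot2 v w <= 0].

Definition limiting_normal_cone n (C : set ('cV[R]_n * 'cV[R]_n)) (z : 'cV[R]_n * 'cV[R]_n)
  : set ('cV[R]_n * 'cV[R]_n) :=
  [set v | C z /\ exists (z_ v_ : nat -> 'cV[R]_n * 'cV[R]_n),
      (forall k, C (z_ k)) /\ z_ @ \oo --> z /\ v_ @ \oo --> v /\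
      (forall k, regular_normal_cone C (z_ k) (v_ k))].

Definition coderivative n (F : 'cV[R]_n -> set 'cV[R]_n) (x y : 'cV[R]_n) (v : 'cV[R]_n)
  : set 'cV[R]_n :=
  [set u | limiting_normal_cone (gph F) (x, y) (u, - v)].

Definition gph_coderivative n (F : 'cV[R]_n -> set 'cV[R]_n) (x y : 'cV[R]_n)
  : set ('cV[R]_n * 'cV[R]_n) :=
  [set p | coderivative F x y p.1 p.2].

Definition sep_sum n (qi : 'I_n -> R -> \bar R) (x : 'cV[R]_n) : \bar R :=
  (\sum_(i < n) qi i (x i ord0))%E.

Definition Aset (m : nat) (xi : nat -> R) : set R :=
  [set t | t = xi 1%N \/ t = xi (2 * m)%N \/
           exists j : nat, (1 <= j < 2 * m)%N /\ xi j.+1 - xi j = 0 /\ t = xi j].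

End Defs.

From HB Require Import structures.
From mathcomp Require Import all_boot all_order all_algebra.
From mathcomp Require Import all_classical all_reals all_analysis.
From mathcomp Require Import ring lra zify.
Set Implicit Arguments.
Unset Strict Implicit.
Unset Printing Implicit Defensive.
Import Order.TTheory GRing.Theory Num.Theory.
Import numFieldNormedType.Exports.
Local Open Scope classical_set_scope.
Local Open Scope ring_scope.

(* Near a point where the polygonal line gph ∂q_i is straight, it lies on a line with
   normal (G_ii, G_ii - 1): a vertical piece when x_i ∈ A_i (G_ii = 1), the sloped
   segment through x_i otherwise.  Every point of gph ∂q_i, vertices included, is a
   limit of such points.  Since gph ∂q is the coordinatewise product of the gph ∂q_i,
   near such a point z it lies in z + {(u, w) : G u = (I - G) w}, so (G v, -(I - G) v)
   is a regular normal there; letting z tend to (x, x^* ) makes it a limiting normal,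
   which is the coderivative inclusion.  The matrix bounds follow from 0 <= G_ii <= 1. *)

Section LocallyLinear.
Variable R : realType.
Implicit Types (L : set (R * R)) (g a b : R).

Definition locally_linear L g a b := L (a, b) /\ exists2 d : R, 0 < d &
  forall a' b', L (a', b') -> `|a' - a| < d -> `|b' - b| < d ->
    g * (a' - a) = (1 - g) * (b' - b).

Definition locally_linear_approx L g a b := exists d1 d2 : R,
  forall e, 0 < e <= 1 -> locally_linear L g (a + e * d1) (b + e * d2).

Lemma locally_linear_approxW L g a b :
  locally_linear L g a b -> locally_linear_approx L g a b.
Proof. by move=> ll; exists 0, 0 => e _; rewrite !mulr0 !addr0. Qed.

End LocallyLinear.

Section PolygonalLine.
Variables (R : realType) (m : nat) (xi eta : nat -> R).
Hypothesis m_gt0 : (0 < m)%N.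
Hypothesis steps : forall j, (1 <= j < 2 * m)%N ->
  (odd j -> 0 < xi j.+1 - xi j /\ 0 <= eta j.+1 - eta j) /\
  (~~ odd j -> xi j.+1 - xi j = 0 /\ 0 < eta j.+1 - eta j).

Local Notation L := (polygonal_line m xi eta).

Definition segment_weight j :=
  (eta j.+1 - eta j) / ((xi j.+1 - xi j) + (eta j.+1 - eta j)).

Lemma xi_step j : (1 <= j < 2 * m)%N -> xi j <= xi j.+1.
Proof.
move=> jm; have [odd_step even_step] := steps jm.
by case: (boolP (odd j)) => oj; [have [] := odd_step oj | have [] := even_step oj]; lra.
Qed.

Lemma eta_step j : (1 <= j < 2 * m)%N -> eta j <= eta j.+1.
Proof.
move=> jm; have [odd_step even_step] := steps jm.
by case: (boolP (odd j)) => oj; [have [] := odd_step oj | have [] := even_step oj]; lra.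
Qed.

Lemma vertex_le (f : nat -> R) :
  (forall j, (1 <= j < 2 * m)%N -> f j <= f j.+1) ->
  forall j k, (1 <= j)%N -> (j <= k)%N -> (k <= 2 * m)%N -> f j <= f k.
Proof.
move=> f_step j k j1 jk k2m.
pose D : {pred nat} := [pred i | 1 <= i <= 2 * m]%N.
have := @homo_leq_in _ D f _ (fun x => lexx x) (fun y x z => @le_trans _ _ y x z).
apply; rewrite ?inE //; try lia.
- by move=> i1 i2; rewrite !inE => ? ? i3 ?; rewrite inE; lia.
- by move=> i; rewrite !inE => Di Di1; apply: f_step; lia.
Qed.

Lemma xi_le j k : (1 <= j)%N -> (j <= k)%N -> (k <= 2 * m)%N -> xi j <= xi k.
Proof. exact: vertex_le xi_step j k. Qed.

Lemma eta_le j k : (1 <= j)%N -> (j <= k)%N -> (k <= 2 * m)%N -> eta j <= eta k.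
Proof. exact: vertex_le eta_step j k. Qed.

Lemma Aset_vertex a : Aset m xi a -> exists2 k, (1 <= k <= 2 * m)%N & a = xi k.
Proof.
case=> [->|[->|[j [/andP[j1 j2m] [_ ->]]]]]; [exists 1%N | exists (2 * m)%N | exists j] => //.
all: by apply/andP; split; lia.
Qed.

Lemma vertex_in_Aset k : (1 <= k <= 2 * m)%N -> Aset m xi (xi k).
Proof.
move=> /andP[k1 k2m].
have [->|k_neq1] := eqVneq k 1%N; first by left.
have [->|k_neq2m] := eqVneq k (2 * m)%N; first by right; left.
right; right; case: (boolP (odd k)) => ok.
  have [j kE] : exists j, k = j.+1 by exists k.-1; lia.
  rewrite kE in ok *; have jm : (1 <= j < 2 * m)%N by apply/andP; split; lia.
  by have [_ /(_ ok)[flat _]] := steps jm; exists j; split => //; split => //; lra.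
have km : (1 <= k < 2 * m)%N by apply/andP; split; lia.
by have [_ /(_ ok)[flat _]] := steps km; exists k.
Qed.

Lemma interior_notin_Aset l a :
  (1 <= l < 2 * m)%N -> xi l < a < xi l.+1 -> ~ Aset m xi a.
Proof.
move=> /andP[l1 l2m] /andP[la al] /Aset_vertex[k /andP[k1 k2m] ak].
have [kl|lk] := leqP k l.
  have : xi k <= xi l by apply: xi_le; lia.
  lra.
have : xi l.+1 <= xi k by apply: xi_le; lia.
lra.
Qed.

Lemma polygonal_line_trichotomy l a b : (1 <= l < 2 * m)%N -> L (a, b) ->
  [\/ a <= xi l /\ b <= eta l, xi l.+1 <= a /\ eta l.+1 <= b |
     exists2 t, 0 <= t <= 1 &
       a = (1 - t) * xi l + t * xi l.+1 /\ b = (1 - t) * eta l + t * eta l.+1].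
Proof.
move=> /andP[l1 l2m].
case=> [[/= -> b1]|[[/= -> b2m]|[j [/andP[j1 j2m] [t /andP[t0 t1] [-> ->]]]]]].
- constructor 1; split; first by apply: xi_le; lia.
  by apply: le_trans b1 _; apply: eta_le; lia.
- constructor 2; split; first by apply: xi_le; lia.
  by apply: le_trans _ b2m; apply: eta_le; lia.
have jm : (1 <= j < 2 * m)%N by apply/andP.
have := xi_step jm; have := eta_step jm.
case: (ltngtP j l) => [jl|lj|<-] xj ej.
- have : xi j.+1 <= xi l by apply: xi_le; lia.
  have : eta j.+1 <= eta l by apply: eta_le; lia.
  by constructor 1; split; nra.
- have : xi l.+1 <= xi j by apply: xi_le; lia.
  have : eta l.+1 <= eta j by apply: eta_le; lia.
  by constructor 2; split; nra.
- by constructor 3; exists t => //; apply/andP.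
Qed.

Lemma segment_in_polygonal_line l t : (1 <= l < 2 * m)%N -> 0 <= t <= 1 ->
  L ((1 - t) * xi l + t * xi l.+1, (1 - t) * eta l + t * eta l.+1).
Proof. by move=> lm t01; right; right; exists l; split => //; exists t. Qed.

Lemma locally_linear_lower_ray b : b < eta 1 -> locally_linear L 1 (xi 1) b.
Proof.
move=> b1; split; first by left; split => //; apply: ltW.
exists (eta 1 - b) => [|a' b']; first lra.
case=> [[/= -> _]|[[/= -> b2m]|[j [jm [t /andP[t0 t1] [-> ->]]]]]] _;
  rewrite ltr_norml => /andP[_ b'b]; first by rewrite !subrr mulr0 mul0r.
- have : eta 1 <= eta (2 * m) by apply: eta_le; lia.
  lra.
- have := eta_step jm; have : eta 1 <= eta j by apply: eta_le; case/andP: jm => *; lia.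
  nra.
Qed.

Lemma locally_linear_upper_ray b :
  eta (2 * m) < b -> locally_linear L 1 (xi (2 * m)) b.
Proof.
move=> b2m; split; first by right; left; split => //; apply: ltW.
exists (b - eta (2 * m)) => [|a' b']; first lra.
case=> [[/= -> b1]|[[/= -> _]|[j [jm [t /andP[t0 t1] [-> ->]]]]]] _;
  rewrite ltr_norml => /andP[bb' _]; last 2 first.
- by rewrite !subrr mulr0 mul0r.
- have := eta_step jm; have : eta j.+1 <= eta (2 * m).
    by apply: eta_le; case/andP: jm => *; lia.
  nra.
have : eta 1 <= eta (2 * m) by apply: eta_le; lia.
lra.
Qed.

Lemma locally_linear_vertical_segment l t :
  (1 <= l < 2 * m)%N -> ~~ odd l -> 0 < t < 1 ->
  locally_linear L 1 (xi l) ((1 - t) * eta l + t * eta l.+1).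
Proof.
move=> lm ol /andP[t0 t1]; have [_ /(_ ol)[flat rise]] := steps lm.
have flatE : xi l.+1 = xi l by lra.
have xlE : xi l = (1 - t) * xi l + t * xi l.+1 by rewrite flatE; ring.
split; first by rewrite {1}xlE; apply: segment_in_polygonal_line => //; apply/andP; split; lra.
exists (Num.min (t * (eta l.+1 - eta l)) ((1 - t) * (eta l.+1 - eta l))) => [|a' b' L'].
  by rewrite lt_min; apply/andP; split; apply: mulr_gt0; lra.
move=> _; rewrite lt_min => /andP[]; rewrite !ltr_norml => /andP[lo1 hi1] /andP[lo2 hi2].
have [[_ b'l]|[_ b'l]|[t' _ [-> _]]] := polygonal_line_trichotomy lm L'; try lra.
by rewrite flatE; ring.
Qed.

Lemma locally_linear_sloped_segment l t :
  (1 <= l < 2 * m)%N -> odd l -> 0 < t < 1 ->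
  locally_linear L (segment_weight l)
    ((1 - t) * xi l + t * xi l.+1) ((1 - t) * eta l + t * eta l.+1).
Proof.
move=> lm ol /andP[t0 t1]; have [/(_ ol)[run rise] _] := steps lm.
split; first by apply: segment_in_polygonal_line => //; apply/andP; split; lra.
exists (Num.min (t * (xi l.+1 - xi l)) ((1 - t) * (xi l.+1 - xi l))) => [|a' b' L'].
  by rewrite lt_min; apply/andP; split; apply: mulr_gt0; lra.
rewrite lt_min => /andP[]; rewrite !ltr_norml => /andP[lo1 hi1] /andP[lo2 hi2] _.
have [[a'l _]|[a'l _]|[t' _ [-> ->]]] := polygonal_line_trichotomy lm L'; try lra.
rewrite /segment_weight; field; lra.
Qed.

Lemma approx_lower_ray b : b <= eta 1 -> locally_linear_approx L 1 (xi 1) b.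
Proof.
move=> b1; exists 0, (-1) => e /andP[e0 _]; rewrite mulr0 addr0.
by apply: locally_linear_lower_ray; lra.
Qed.

Lemma approx_upper_ray b :
  eta (2 * m) <= b -> locally_linear_approx L 1 (xi (2 * m)) b.
Proof.
move=> b2m; exists 0, 1 => e /andP[e0 _]; rewrite mulr0 addr0.
by apply: locally_linear_upper_ray; lra.
Qed.

(* Move towards the midpoint of the segment, staying in its relative interior. *)
Lemma approx_vertical_segment l t :
  (1 <= l < 2 * m)%N -> ~~ odd l -> 0 <= t <= 1 ->
  locally_linear_approx L 1 (xi l) ((1 - t) * eta l + t * eta l.+1).
Proof.
move=> lm ol /andP[t0 t1].
exists 0, ((2^-1 - t) * (eta l.+1 - eta l)) => e /andP[e0 e1]; rewrite mulr0 addr0.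
have -> : (1 - t) * eta l + t * eta l.+1 + e * ((2^-1 - t) * (eta l.+1 - eta l))
   = (1 - ((1 - e) * t + e / 2)) * eta l + ((1 - e) * t + e / 2) * eta l.+1.
  by field.
by apply: locally_linear_vertical_segment => //; apply/andP; split; nra.
Qed.

Lemma approx_vertex k :
  (1 <= k <= 2 * m)%N -> locally_linear_approx L 1 (xi k) (eta k).
Proof.
move=> /andP[k1 k2m].
have [->|k_neq1] := eqVneq k 1%N; first exact: approx_lower_ray.
have [->|k_neq2m] := eqVneq k (2 * m)%N; first exact: approx_upper_ray.
have t01 : 0 <= (1 : R) <= 1 by rewrite ler01 lexx.
have t00 : 0 <= (0 : R) <= 1 by rewrite lexx ler01.
case: (boolP (odd k)) => ok.
  have [j kE] : exists j, k = j.+1 by exists k.-1; lia.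
  rewrite kE in ok *; have jm : (1 <= j < 2 * m)%N by apply/andP; split; lia.
  have [_ /(_ ok)[flat _]] := steps jm.
  have := approx_vertical_segment jm ok t01.
  by rewrite subrr mul0r add0r mul1r (_ : xi j = xi j.+1) //; lra.
have km : (1 <= k < 2 * m)%N by apply/andP; split; lia.
by have := approx_vertical_segment km ok t00; rewrite subr0 mul1r mul0r addr0.
Qed.

Lemma polygonal_line_cases a b : L (a, b) ->
  (Aset m xi a /\ locally_linear_approx L 1 a b) \/
  exists l t, [/\ (1 <= l < 2 * m)%N, odd l, 0 < t < 1,
    a = (1 - t) * xi l + t * xi l.+1 & b = (1 - t) * eta l + t * eta l.+1].
Proof.
case=> [[/= -> b1]|[[/= -> b2m]|[l [lm [t t01 [-> ->]]]]]].
- by left; split; [left | exact: approx_lower_ray].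
- by left; split; [right; left | exact: approx_upper_ray].
have lm' : (1 <= l <= 2 * m)%N by case/andP: lm => l1 l2m; apply/andP; split; lia.
have l1m : (1 <= l.+1 <= 2 * m)%N by case/andP: lm => l1 l2m; apply/andP; split; lia.
case: (boolP (odd l)) => ol; last first.
  have [_ /(_ ol)[flat _]] := steps lm.
  have -> : (1 - t) * xi l + t * xi l.+1 = xi l by rewrite (_ : xi l.+1 = xi l); [ring | lra].
  by left; split; [exact: vertex_in_Aset | exact: approx_vertical_segment].
have [->|t_neq0] := eqVneq t 0.
  rewrite subr0 !mul1r !mul0r !addr0.
  by left; split; [exact: vertex_in_Aset | exact: approx_vertex].
have [->|t_neq1] := eqVneq t 1.
  rewrite subrr !mul0r !mul1r !add0r.
  by left; split; [exact: vertex_in_Aset | exact: approx_vertex].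
right; exists l, t; split => //.
by case/andP: t01 => t0 t1; rewrite !lt_neqAle eq_sym t_neq0 t_neq1 t0 t1.
Qed.

Lemma polygonal_line_weight a b g : L (a, b) ->
  (Aset m xi a -> g = 1) ->
  (forall j, (1 <= j < 2 * m)%N -> odd j -> xi j <= a <= xi j.+1 ->
     ~ Aset m xi a -> g = segment_weight j) ->
  0 <= g <= 1 /\ locally_linear_approx L g a b.
Proof.
move=> Lab gA gS.
have [[Aa approx]|[l [t [lm ol /andP[t0 t1] aE bE]]]] := polygonal_line_cases Lab.
  by rewrite (gA Aa) ler01 lexx.
have [/(_ ol)[run rise] _] := steps lm.
have a_int : xi l < a < xi l.+1 by rewrite aE; apply/andP; split; nra.
have -> : g = segment_weight l.
  apply: gS => //; last exact: interior_notin_Aset a_int.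
  by case/andP: a_int => *; apply/andP; split; apply: ltW.
split.
  rewrite /segment_weight; apply/andP; split; first by apply: divr_ge0; lra.
  by rewrite ler_pdivrMr ?mul1r; lra.
rewrite aE bE; apply/locally_linear_approxW/locally_linear_sloped_segment => //.
exact/andP.
Qed.

End PolygonalLine.

Definition coordinate_product (R : realType) n (L : 'I_n -> set (R * R)) :
  set ('cV[R]_n * 'cV[R]_n) :=
  [set p : 'cV[R]_n * 'cV[R]_n | forall i, L i (p.1 i ord0, p.2 i ord0)].

Section SeparableSum.
Variables (R : realType) (n : nat) (qi : 'I_n -> R -> \bar R).
Hypothesis qi_neq_ninfty : forall i t, qi i t != -oo%E.

Lemma subdiff_sep_sumP x s :
  subdiff (sep_sum qi) x s <-> forall i, subdiff1 (qi i) (x i ord0) (s i ord0).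
Proof.
split; last first.
  move=> sub; split; first by apply/sum_fin_numP => i _ _; have [] := sub i.
  move=> y; rewrite /sep_sum /dotv -sumEFin -big_split /=; apply: lee_sum => i _.
  by rewrite !mxE; have [_] := sub i; apply.
move=> [fin_x sub] i; have fin_xi k : qi k (x k ord0) \is a fin_num.
  by move/sum_fin_numP: fin_x; apply => //; rewrite mem_index_enum.
split => // y; pose Y : 'cV[R]_n := \col_k (if k == i then y else x k ord0).
have := sub Y.
have -> : dotv s (Y - x) = s i ord0 * (y - x i ord0).
  rewrite /dotv (bigD1 i) //= big1 ?addr0; first by rewrite !mxE eqxx.
  by move=> k /negbTE ki; rewrite !mxE ki subrr mulr0.
pose r k := fine (qi k (x k ord0)).
have qxE : sep_sum qi x = (\sum_(k < n) r k)%:E.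
  by rewrite /sep_sum -sumEFin; apply: eq_bigr => k _; rewrite /r fineK.
case qyE: (qi i y) => [q| |]; last by move: (qi_neq_ninfty i y); rewrite qyE.
- have qYE : sep_sum qi Y = (\sum_(k < n) (if k == i then q else r k))%:E.
    rewrite /sep_sum -sumEFin; apply: eq_bigr => k _; rewrite !mxE.
    by case: eqP => [->|_]; [rewrite qyE | rewrite /r fineK].
  rewrite qxE qYE -EFinD lee_fin (bigD1 i) //= [X in _ <= X](bigD1 i) //= eqxx.
  have -> : \sum_(k < n | k != i) (if k == i then q else r k) = \sum_(k < n | k != i) r k.
    by apply: eq_bigr => k /negbTE ->.
  by rewrite -(fineK (fin_xi i)) -EFinD lee_fin -/(r i); lra.
- by rewrite leey.
Qed.

Lemma gph_subdiff_sep_sum :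
  gph (subdiff (sep_sum qi)) = coordinate_product (fun i => gph1 (subdiff1 (qi i))).
Proof. by apply/seteqP; split => p /subdiff_sep_sumP. Qed.

End SeparableSum.

Section DiagonalMatrix.
Variables (R : realType) (n : nat) (g : 'I_n -> R).
Local Notation G := (diag_mx (\row_i g i)).

Lemma mul_diag_col (v : 'cV[R]_n) i : (G *m v) i ord0 = g i * v i ord0.
Proof. by rewrite mul_diag_mx !mxE. Qed.

Lemma psd_diag : (forall i, 0 <= g i) -> psd G.
Proof.
move=> g_ge0 v; apply: sumr_ge0 => i _; rewrite mul_diag_col mulrCA.
by apply: mulr_ge0 => //; rewrite -expr2 sqr_ge0.
Qed.

Lemma eucl_norm_diag_le (v : 'cV[R]_n) :
  (forall i, `|g i| <= 1) -> eucl_norm (G *m v) <= eucl_norm v.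
Proof.
move=> g_le1; apply: ler_wsqrtr; apply: ler_sum => i _.
rewrite mul_diag_col mulrACA -[X in _ <= X]mul1r ler_wpM2r -?expr2 ?sqr_ge0 //.
by rewrite -real_normK ?num_real // exprn_ile1.
Qed.

End DiagonalMatrix.

Lemma spectral_norm_le (R : realType) n (A : 'M[R]_n) c :
  0 <= c -> (forall v, eucl_norm (A *m v) <= c * eucl_norm v) -> spectral_norm A <= c.
Proof.
move=> c_ge0 A_le; rewrite /spectral_norm.
set S := [set _ | _ in _]; have [->|/set0P neS] := eqVneq S set0.
  by rewrite sup0.
apply: ge_sup => //.
by move=> _ [v /= v1 <-]; rewrite -[c]mulr1 -v1.
Qed.

Section NormalCones.
Variables (R : realType) (n : nat).
Implicit Types (z p w nu : 'cV[R]_n * 'cV[R]_n).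

Lemma cvg_mx_entry T (F : set_system T) {FF : Filter F} m k
    (f : T -> 'M[R]_(m, k)) (A : 'M[R]_(m, k)) i j :
  f @ F --> A -> (fun x => f x i j) @ F --> A i j.
Proof.
move=> /cvg_mx_entourageP f_A.
apply/(cvg_entourageP (fmap_filter _ FF)) => E entE.
by move: (f_A E entE); apply: (@filterS _ F) => x /(_ i j); rewrite inE.
Qed.

Lemma continuous_mx_entry m k (i : 'I_m) (j : 'I_k) :
  continuous (fun A : 'M[R]_(m, k) => A i j).
Proof. by move=> A; apply: (@cvg_mx_entry _ (nbhs A) _ _ _ id). Qed.

Lemma continuous_dotv (u : 'cV[R]_n) : continuous (dotv u).
Proof.
apply: continuous_big => [|i _]; first exact: add_continuous.
by move=> w; apply: (@cvgMr _ _ (nbhs w)); exact: continuous_mx_entry.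
Qed.

Lemma continuous_dot2 nu : continuous (dot2 nu).
Proof.
move=> w; apply: cvgD.
  by apply: (@continuous_comp _ _ _ fst); [exact: cvg_fst | exact: continuous_dotv].
by apply: (@continuous_comp _ _ _ snd); [exact: cvg_snd | exact: continuous_dotv].
Qed.

Lemma dot2Zr nu t (w1 w2 : 'cV[R]_n) :
  dot2 nu (t *: w1, t *: w2) = t * dot2 nu (w1, w2).
Proof.
rewrite /dot2 /dotv mulrDr !mulr_sumr /=.
by congr (_ + _); apply: eq_bigr => i _; rewrite mxE mulrCA.
Qed.

Lemma cvg_add_vanishing z w (t : nat -> R) (w_ : nat -> 'cV[R]_n * 'cV[R]_n) :
  t @ \oo --> 0 -> w_ @ \oo --> w ->
  (fun k => (z.1 + t k *: (w_ k).1, z.2 + t k *: (w_ k).2)) @ \oo --> z.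
Proof.
move=> t_0 w_w.
have w1 : (fun k => (w_ k).1) @ \oo --> w.1 :=
  cvg_comp _ _ w_w (@cvg_fst _ _ (nbhs w.1) (nbhs w.2) (nbhs_filter w.2)).
have w2 : (fun k => (w_ k).2) @ \oo --> w.2 :=
  cvg_comp _ _ w_w (@cvg_snd _ _ (nbhs w.1) (nbhs w.2) (nbhs_filter w.1)).
have to_z1 : (fun k => z.1 + t k *: (w_ k).1) @ \oo --> z.1 + 0 *: w.1.
  by apply: cvgD; [exact: cvg_cst | exact: cvgZ].
have to_z2 : (fun k => z.2 + t k *: (w_ k).2) @ \oo --> z.2 + 0 *: w.2.
  by apply: cvgD; [exact: cvg_cst | exact: cvgZ].
rewrite scale0r addr0 in to_z1; rewrite scale0r addr0 in to_z2.
exact: (@cvg_pair _ _ _ _ (nbhs z.1) (nbhs z.2) _ _ _ _ _ to_z1 to_z2).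
Qed.

Lemma near_coord z i e : 0 < e ->
  \forall p \near z,
    `|(p : 'cV[R]_n * 'cV[R]_n).1 i ord0 - z.1 i ord0| < e /\ `|p.2 i ord0 - z.2 i ord0| < e.
Proof.
move=> e_gt0.
have c1 : (fun p : 'cV[R]_n * 'cV[R]_n => p.1 i ord0) @ nbhs z --> z.1 i ord0 :=
  continuous_comp (@cvg_fst _ _ _ _ (nbhs_filter z.2)) (@continuous_mx_entry _ _ i ord0 z.1).
have c2 : (fun p : 'cV[R]_n * 'cV[R]_n => p.2 i ord0) @ nbhs z --> z.2 i ord0 :=
  continuous_comp (@cvg_snd _ _ _ _ (nbhs_filter z.1)) (@continuous_mx_entry _ _ i ord0 z.2).
near=> p; rewrite distrC [X in _ /\ X < _]distrC; split; near: p.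
  exact: (cvgr_dist_lt _ _ c1 _ e_gt0).
exact: (cvgr_dist_lt _ _ c2 _ e_gt0).
Unshelve. all: by end_near.
Qed.

Lemma regular_normal_of_near C z nu :
  (\forall p \near z, C p -> dot2 nu (p.1 - z.1, p.2 - z.2) <= 0) ->
  regular_normal_cone C z nu.
Proof.
move=> near_le w [t [w_ [t_gt0 [t_0 [w_w Cw]]]]].
have to_z := @cvg_add_vanishing z _ _ _ t_0 w_w.
have ev_le : \forall k \near \oo, dot2 nu (w_ k) <= 0.
  move: (to_z _ near_le); apply: (@filterS _ \oo) => k /(_ (Cw k)).
  by rewrite /= (addrC z.1) (addrC z.2) !addrK dot2Zr pmulr_rle0 // -surjective_pairing.
apply: (closed_cvg _ (@closed_le _ 0) ev_le).
exact: (continuous_cvg _ (@continuous_dot2 nu w) w_w).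
Qed.

End NormalCones.

Section CoordinateProduct.
Variables (R : realType) (n : nat) (L : 'I_n -> set (R * R)) (g : 'I_n -> R).
Local Notation G := (diag_mx (\row_i g i)).

Lemma dot2_diag_normal (v : 'cV[R]_n) d :
  dot2 (G *m v, - ((1%:M - G) *m v)) d =
  \sum_i v i ord0 * (g i * d.1 i ord0 - (1 - g i) * d.2 i ord0).
Proof.
rewrite /dot2 /dotv -big_split; apply: eq_bigr => i _ /=.
by rewrite mulmxBl mul1mx mul_diag_mx !mxE; ring.
Qed.

Lemma regular_normal_coordinate_product (z : 'cV[R]_n * 'cV[R]_n) v :
  (forall i, locally_linear (L i) (g i) (z.1 i ord0) (z.2 i ord0)) ->
  regular_normal_cone (coordinate_product L) z (G *m v, - ((1%:M - G) *m v)).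
Proof.
move=> lin; apply: regular_normal_of_near.
have /choice[d dP] i : exists d, 0 < d /\ forall a b, L i (a, b) ->
    `|a - z.1 i ord0| < d -> `|b - z.2 i ord0| < d ->
    g i * (a - z.1 i ord0) = (1 - g i) * (b - z.2 i ord0).
  by have [_ [d d_gt0 dP]] := lin i; exists d.
have near_all : \forall p \near z, forall i,
    `|(p : 'cV[R]_n * 'cV[R]_n).1 i ord0 - z.1 i ord0| < d i /\
    `|p.2 i ord0 - z.2 i ord0| < d i.
  exact: (filter_forall _ (fun i => near_coord z i (proj1 (dP i)))).
move: near_all; apply: filterS => p close Cp; rewrite dot2_diag_normal big1 // => i _.
have [_ lin_i] := dP i; have [close1 close2] := close i.
by rewrite !mxE (lin_i _ _ (Cp i) close1 close2) subrr mulr0.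
Qed.

Lemma limiting_normal_coordinate_product (z : 'cV[R]_n * 'cV[R]_n) v :
  coordinate_product L z ->
  (forall i, locally_linear_approx (L i) (g i) (z.1 i ord0) (z.2 i ord0)) ->
  limiting_normal_cone (coordinate_product L) z (G *m v, - ((1%:M - G) *m v)).
Proof.
move=> Cz approx; split => //.
have /choice[d dP] i : exists d : R * R, forall e, 0 < e <= 1 ->
    locally_linear (L i) (g i) (z.1 i ord0 + e * d.1) (z.2 i ord0 + e * d.2).
  by have [d1 [d2 dP]] := approx i; exists (d1, d2).
pose dir : 'cV[R]_n * 'cV[R]_n := (\col_i (d i).1, \col_i (d i).2).
pose z_ k := (z.1 + harmonic k *: dir.1, z.2 + harmonic k *: dir.2).
have lin k i : locally_linear (L i) (g i) ((z_ k).1 i ord0) ((z_ k).2 i ord0).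
  rewrite !mxE; apply: dP.
  by rewrite /harmonic invr_gt0 ltr0Sn invf_le1 ?ltr0Sn // ler1n.
exists z_, (fun=> (G *m v, - ((1%:M - G) *m v))); split; [|split; [|split]].
- by move=> k i; have [] := lin k i.
- exact: cvg_add_vanishing cvg_harmonic (cvg_cst dir).
- exact: cvg_cst.
- by move=> k; apply: regular_normal_coordinate_product; exact: lin.
Qed.

End CoordinateProduct.

Theorem proposition6p1 (R : realType) (n : nat)
  (qi : 'I_n -> R -> \bar R) (m : 'I_n -> nat) (xi eta : 'I_n -> nat -> R)
  (x xs : 'cV[R]_n) (g : 'I_n -> R) :
  (forall i, proper_fun (qi i) /\ convex_fun (qi i) /\ lsc_fun (qi i)) ->
  (forall i, (1 <= m i)%N) ->
  (forall i, gph1 (subdiff1 (qi i)) = polygonal_line (m i) (xi i) (eta i)) ->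
  (forall i (j : nat), (1 <= j < 2 * m i)%N ->
     (odd j -> 0 < xi i j.+1 - xi i j /\ 0 <= eta i j.+1 - eta i j) /\
     (~~ odd j -> xi i j.+1 - xi i j = 0 /\ 0 < eta i j.+1 - eta i j)) ->
  subdiff (sep_sum qi) x xs ->
  (forall i,
     (Aset (m i) (xi i) (x i ord0) -> g i = 1) /\
     (forall j : nat, (1 <= j < 2 * m i)%N -> odd j ->
        xi i j <= x i ord0 <= xi i j.+1 -> ~ Aset (m i) (xi i) (x i ord0) ->
        g i = (eta i j.+1 - eta i j) /
              ((xi i j.+1 - xi i j) + (eta i j.+1 - eta i j)))) ->
  let G : 'M[R]_n := diag_mx (\row_i g i) in
  psd G /\ spectral_norm G <= 1 /\
  (forall v : 'cV[R]_n,
     gph_coderivative (subdiff (sep_sum qi)) x xs ((1%:M - G) *m v, G *m v)).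
Proof.
move=> q_ok m_gt0 gph_q steps x_xs weights G.
have q_ninfty i t : qi i t != -oo%E by have [[]] := q_ok i.
have gphE : gph (subdiff (sep_sum qi)) =
    coordinate_product (fun i => polygonal_line (m i) (xi i) (eta i)).
  by rewrite gph_subdiff_sep_sum //; congr coordinate_product; apply: funext.
have on_lines : coordinate_product (fun i => polygonal_line (m i) (xi i) (eta i)) (x, xs).
  by rewrite -gphE.
have g_props i : 0 <= g i <= 1 /\
    locally_linear_approx (polygonal_line (m i) (xi i) (eta i)) (g i) (x i ord0) (xs i ord0).
  have [gA gS] := weights i.
  exact: (polygonal_line_weight (m_gt0 i) (steps i) (on_lines i) gA gS).
split; [|split].
- by apply: psd_diag => i; have [/andP[]] := g_props i.
- apply: spectral_norm_le => // v; rewrite mul1r; apply: eucl_norm_diag_le => i.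
  by have [/andP[g0 g1] _] := g_props i; rewrite ger0_norm.
- move=> v; rewrite /gph_coderivative /coderivative /= gphE.
  by apply: limiting_normal_coordinate_product => // i; have [] := g_props i.
Qed.
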